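(* Let $R$ be a unital ring with involution, let $a\in R$ be core invertible with core inverse $a^{\circledast}$, and let $b\in R$. Then the following conditions are equivalent: (1) $a\overset{\circledast}{\leq} b$; (2) $b a^{\circledast} b=a$ and $a^{\circledast} b a^{\circledast}=a^{\circledast}$; (3) $a a^{\circledast} b=a=b a^{\circledast} a$; (4) $b-a\in {}^{\circ}a\cap (a^{*})^{\circ}$, i.e. $(b-a)a=0$ and $a^{*}(b-a)=0$; (5) $b-a\in (1-aa^{\circledast})R\cap R(1-aa^{\circledast})$; (6) $b-a\in {}^{\circ}(aa^{\circledast})\cap (aa^{\circledast})^{\circ}$, i.e. $(b-a)aa^{\circledast}=0$ and $aa^{\circledast}(b-a)=0$.
   Context: $R$ is a ring with identity and an involution $x\mapsto x^{*}$ (so $(x^* )^*=x$, $(xy)^*=y^*x^*$, $(x+y)^*=x^*+y^*$). An element $a\in R$ is core invertible if there exists $x\in R$ with $axa=a$, $xR=aR$ and $Rx=Ra^{*}$; such $x$ is unique, called the core inverse of $a$ and denoted $a^{\circledast}$. For $a$ core invertible and $b\in R$, the core partial order is defined by $a\overset{\circledast}{\leq} b$ iff $a^{\circledast}a=a^{\circledast}b$ and $aa^{\circledast}=ba^{\circledast}$. For $c\in R$, ${}^{\circ}c=\{x\in R: xc=0\}$ and $c^{\circ}=\{x\in R: cx=0\}$; $cR=\{cx:x\in R\}$, $Rc=\{xc:x\in R\}$. *)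

From HB Require Import structures.
From mathcomp Require Import all_boot all_algebra.
Set Implicit Arguments. Unset Strict Implicit. Unset Printing Implicit Defensive.
Import GRing.Theory.
Local Open Scope ring_scope.

Definition is_involution (R : pzRingType) (s : R -> R) : Prop :=
  [/\ forall x, s (s x) = x,
      forall x y, s (x * y) = s y * s x &
      forall x y, s (x + y) = s x + s y].

Definition in_rideal (R : pzRingType) (c z : R) : Prop := exists y, z = c * y.
Definition in_lideal (R : pzRingType) (c z : R) : Prop := exists y, z = y * c.

Definition is_core_inverse (R : pzRingType) (s : R -> R) (a x : R) : Prop :=
  [/\ a * x * a = a,
      forall z, in_rideal x z <-> in_rideal a z &
      forall z, in_lideal x z <-> in_lideal (s a) z].

(* Core partial order, given the core inverse ac of a. *)
Definition core_le (R : pzRingType) (a ac b : R) : Prop :=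
  ac * a = ac * b /\ a * ac = b * ac.

From HB Require Import structures.
From Stdlib Require Import Setoid.
From mathcomp Require Import all_boot all_algebra.
Import GRing.Theory.
Local Open Scope ring_scope.

(* With p := a a#, the core inverse a# generates the same right ideal
   as a and the same left ideal as a^*, so left annihilators of a, a# and p
   coincide, and so do right annihilators of a^*, a# and p (p is a self-adjoint
   idempotent).  Each condition is then a rewording of a# (b - a) = 0 = (b - a) a#. *)

Lemma subr_eq0P (R : pzRingType) (x y : R) : x - y = 0 <-> x = y.
Proof. by split=> [/eqP|->]; [rewrite subr_eq0 => /eqP | rewrite subrr]. Qed.

Lemma lann_eq_rideal (R : pzRingType) (a x : R) :
  in_rideal a x -> in_rideal x a -> forall y, y * a = 0 <-> y * x = 0.
Proof.
move=> [u hx] [v ha] y.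
by split=> h; [rewrite hx mulrA h mul0r | rewrite ha mulrA h mul0r].
Qed.

Lemma rann_eq_lideal (R : pzRingType) (a x : R) :
  in_lideal a x -> in_lideal x a -> forall y, a * y = 0 <-> x * y = 0.
Proof.
move=> [u hx] [v ha] y.
by split=> h; [rewrite hx -mulrA h mulr0 | rewrite ha -mulrA h mulr0].
Qed.

Section CoreInverse.

Variables (R : pzRingType) (s : R -> R) (a ac : R).
Hypotheses (hs : is_involution s) (hac : is_core_inverse s a ac).

Lemma core_inverse_inner : a * ac * a = a.
Proof. by case: hac. Qed.

Lemma core_proj_idem : a * ac * (a * ac) = a * ac.
Proof. by rewrite mulrA core_inverse_inner. Qed.

Lemma core_inverse_rideal : in_rideal a ac /\ in_rideal ac a.
Proof.
case: hac => _ hr _.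
by split; [apply/hr | apply/hr]; exists 1; rewrite mulr1.
Qed.

Lemma core_inverse_lideal : in_lideal (s a) ac /\ in_lideal ac (s a).
Proof.
case: hac => _ _ hl.
by split; [apply/hl | apply/hl]; exists 1; rewrite mul1r.
Qed.

Lemma core_inverse_mulr_adj : ac = ac * s (a * ac).
Proof.
case: hs => _ sM _; have [[w hw] _] := core_inverse_lideal.
by rewrite [in LHS]hw -[in s a]core_inverse_inner sM mulrA -hw.
Qed.

(* From p = p p^*: taking adjoints gives p^* = p p^* = p. *)
Lemma core_proj_adj : s (a * ac) = a * ac.
Proof.
case: hs => sK sM _.
have e1 : a * ac = a * ac * s (a * ac) by rewrite -mulrA -core_inverse_mulr_adj.
have e2 : s (a * ac) = a * ac * s (a * ac) by rewrite {1}e1 sM sK.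
by rewrite e2 -e1.
Qed.

Lemma core_inverse_outer : ac * (a * ac) = ac.
Proof. by rewrite -core_proj_adj -core_inverse_mulr_adj. Qed.

Lemma lann_core_inverse y : y * a = 0 <-> y * ac = 0.
Proof. by have [h1 h2] := core_inverse_rideal; exact: lann_eq_rideal h1 h2 y. Qed.

Lemma lann_core_proj y : y * a = 0 <-> y * (a * ac) = 0.
Proof.
split=> h; first by rewrite mulrA h mul0r.
by rewrite -core_inverse_inner mulrA h mul0r.
Qed.

Lemma lann_core_inverse_mul y : y * ac = 0 <-> y * (ac * a) = 0.
Proof.
split=> h; first by rewrite mulrA h mul0r.
by rewrite -core_inverse_outer !mulrA -(mulrA y) h mul0r.
Qed.

Lemma rann_core_inverse y : s a * y = 0 <-> ac * y = 0.
Proof. by have [h1 h2] := core_inverse_lideal; exact: rann_eq_lideal h1 h2 y. Qed.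

Lemma rann_core_proj y : ac * y = 0 <-> a * ac * y = 0.
Proof.
split=> h; first by rewrite -mulrA h mulr0.
by rewrite -core_inverse_outer -mulrA h mulr0.
Qed.

Variable b : R.

Lemma core_leE : core_le a ac b <-> ac * (b - a) = 0 /\ (b - a) * ac = 0.
Proof.
rewrite /core_le mulrBr mulrBl.
by rewrite !subr_eq0P; split=> [[-> ->] | [-> ->]].
Qed.

Lemma core_le_iff_inner :
  core_le a ac b <-> b * ac * b = a /\ ac * b * ac = ac.
Proof.
split=> [/core_leE [h1 h2] | [h1 h2]].
  have xb : ac * b = ac * a by apply/subr_eq0P; rewrite -mulrBr.
  have bx : b * ac = a * ac by apply/subr_eq0P; rewrite -mulrBl.
  split; first by rewrite bx -mulrA xb mulrA core_inverse_inner.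
  by rewrite xb -[RHS]core_inverse_outer mulrA.
split; first by rewrite -h1 !mulrA h2.
by rewrite -h1 -!mulrA (mulrA ac) h2.
Qed.

Lemma core_le_iff_absorb :
  core_le a ac b <-> a * ac * b = a /\ b * ac * a = a.
Proof.
rewrite core_leE rann_core_proj lann_core_inverse_mul mulrBr mulrBl !mulrA.
by rewrite core_inverse_inner !subr_eq0P.
Qed.

Lemma core_le_iff_annihilators :
  core_le a ac b <-> (b - a) * a = 0 /\ s a * (b - a) = 0.
Proof. by rewrite core_leE lann_core_inverse rann_core_inverse; tauto. Qed.

Lemma core_le_iff_proj_annihilators :
  core_le a ac b <-> (b - a) * (a * ac) = 0 /\ a * ac * (b - a) = 0.
Proof. by rewrite core_leE rann_core_proj -lann_core_inverse lann_core_proj; tauto. Qed.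

(* [z] lies in [(1 - p)R] iff [p z = 0], and in [R(1 - p)] iff [z p = 0],
   since [p = a a#] is idempotent. *)
Lemma core_le_iff_ideals :
  core_le a ac b <->
  in_rideal (1 - a * ac) (b - a) /\ in_lideal (1 - a * ac) (b - a).
Proof.
rewrite core_le_iff_proj_annihilators; split=> [[h1 h2] | [[y hy] [z hz]]].
  split; exists (b - a).
    by rewrite mulrBl mul1r h2 subr0.
  by rewrite mulrBr mulr1 h1 subr0.
split.
  by rewrite hz -mulrA mulrBl mul1r core_proj_idem subrr mulr0.
by rewrite hy mulrA mulrBr mulr1 core_proj_idem subrr mul0r.
Qed.

End CoreInverse.

Theorem theorem2p3 (R : pzRingType) (s : R -> R) (a ac b : R) :
  is_involution s ->
  is_core_inverse s a ac ->
  [/\ (core_le a ac b <->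
       (b * ac * b = a /\ ac * b * ac = ac)),
      (core_le a ac b <->
       (a * ac * b = a /\ b * ac * a = a)),
      (core_le a ac b <->
       ((b - a) * a = 0 /\ s a * (b - a) = 0)),
      (core_le a ac b <->
       (in_rideal (1 - a * ac) (b - a) /\ in_lideal (1 - a * ac) (b - a))) &
      (core_le a ac b <->
       ((b - a) * (a * ac) = 0 /\ (a * ac) * (b - a) = 0))].
Proof.
move=> hs hac; split.
- exact: core_le_iff_inner hs hac b.
- exact: core_le_iff_absorb hs hac b.
- exact: core_le_iff_annihilators hac b.
- exact: core_le_iff_ideals hs hac b.
- exact: core_le_iff_proj_annihilators hs hac b.
Qed.
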